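(* Let $\varphi:X\to\mathbb R$ be Lipschitz continuous, let $u:X\to\mathbb R$ be a calibrated subaction of $\varphi$ and $\underline{y}^{(0)}\in X$. For each $n\ge1$ let $\underline{y}^{(-n)}$ be a point with $\sigma(\underline{y}^{(-n)})=\underline{y}^{(-n+1)}$ and $u(\underline{y}^{(-n+1)})=\varphi(\underline{y}^{(-n)})+u(\underline{y}^{(-n)})-\alpha_\varphi$. Then every accumulation point of $\{\underline{y}^{(-n)}\}_{n\ge1}$ belongs to $\Omega_\varphi$.
   Context: $X=[0,1]^{\mathbb N_0}$ with metric $d_X(\underline{x},\underline{y})=\sum_{i\ge0}|x_i-y_i|/2^{i+1}$ and shift $\sigma(\underline{x})_i=x_{i+1}$. $\alpha_\varphi=\inf_\mu\int\varphi\,d\mu$ over $\sigma$-invariant Borel probability measures. $B(\underline{x},\underline{y},n;\varepsilon)=\{\underline{z}: d_X(\underline{x},\underline{z})<\varepsilon,\ d_X(\sigma^n\underline{z},\underline{y})<\varepsilon\}$. Mañé potential $S_\varphi(\underline{x},\underline{y})=\lim_{\varepsilon\to0}\inf\{\sum_{i=0}^{n-1}(\varphi(\sigma^i\underline{z})-\alpha_\varphi): n\in\mathbb N,\ \underline{z}\in B(\underline{x},\underline{y},n;\varepsilon)\}$; Aubry set $\Omega_\varphi=\{\underline{x}: S_\varphi(\underline{x},\underline{x})=0\}$. A subaction is a continuous $u$ with $u(\underline{x})+\varphi(\underline{x})\ge u(\sigma\underline{x})+\alpha_\varphi$ for all $\underline{x}$; it is calibrated if $\min_{\sigma(\underline{y})=\underline{x}}(\varphi(\underline{y})+u(\underline{y}))=u(\underline{x})+\alpha_\varphi$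 for every $\underline{x}$. *)

From HB Require Import structures.
From mathcomp Require Import all_boot all_order all_algebra.
From mathcomp Require Import all_classical all_reals all_analysis.
Set Implicit Arguments. Unset Strict Implicit. Unset Printing Implicit Defensive.
Import Order.TTheory GRing.Theory Num.Theory.
Import numFieldNormedType.Exports.
Local Open Scope classical_set_scope.
Local Open Scope ring_scope.

Section Defs.
Variable R : realType.

Record X := MkX { xs : nat -> R ; xs_in : forall i, 0 <= xs i <= 1 }.

Lemma zero_in_unit (i : nat) : 0 <= (fun _ : nat => 0 : R) i <= 1.
Proof. by rewrite /= lexx ler01. Qed.

HB.instance Definition _ := gen_eqMixin X.
HB.instance Definition _ := gen_choiceMixin X.
HB.instance Definition _ := isPointed.Build X (MkX zero_in_unit).

Definition dX (x y : X) : R :=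
  limn (series (fun i => `|xs x i - xs y i| / 2 ^+ i.+1)).

Lemma shift_in (x : X) i : 0 <= xs x i.+1 <= 1.
Proof. exact: xs_in. Qed.
Definition sshift (x : X) : X := MkX (shift_in x).

Definition dX_open : set (set X) :=
  [set A | forall x, A x -> exists2 e : R, 0 < e & forall y, dX x y < e -> A y].
Definition XB := g_sigma_algebraType dX_open.

Definition invariant_prob (mu : {measure set XB -> \bar R}) : Prop :=
  mu setT = 1%E /\
  forall A : set XB, measurable A -> mu (sshift @^-1` A) = mu A.

Definition alpha_phi (phi : X -> R) : R :=
  fine (ereal_inf [set r | exists mu : {measure set XB -> \bar R},
      invariant_prob mu /\ r = (\int[mu]_x (phi x)%:E)%E]).

Definition dX_continuous (f : X -> R) : Prop :=
  forall x (e : R), 0 < e -> exists2 d : R, 0 < d &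
    forall y, dX x y < d -> `|f x - f y| < e.
Definition dX_lipschitz (f : X -> R) : Prop :=
  exists L : R, forall x y, `|f x - f y| <= L * dX x y.

Definition mane_inf (phi : X -> R) (x y : X) (eps : R) : \bar R :=
  ereal_inf [set r | exists n : nat, exists z : X,
     (0 < n)%N /\ dX x z < eps /\ dX (iter n sshift z) y < eps /\
     r = (\sum_(i < n) (phi (iter i sshift z) - alpha_phi phi))%:E].

Definition mane (phi : X -> R) (x y : X) : \bar R :=
  lim (mane_inf phi x y eps @[eps --> 0^'+]).

Definition aubry (phi : X -> R) : set X := [set x | mane phi x x = 0%E].

Definition subaction (phi u : X -> R) : Prop :=
  dX_continuous u /\
  forall x, u x + phi x >= u (sshift x) + alpha_phi phi.

Definition calibrated_subaction (phi u : X -> R) : Prop :=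
  subaction phi u /\
  forall x, (exists2 y, sshift y = x & phi y + u y = u x + alpha_phi phi) /\
            (forall y, sshift y = x -> phi y + u y >= u x + alpha_phi phi).

Definition accumulation_point (y : nat -> X) (p : X) : Prop :=
  forall (e : R), 0 < e -> forall N : nat, exists n : nat,
    (1 <= n)%N /\ (N <= n)%N /\ dX (y n) p < e.

End Defs.

From HB Require Import structures.
From mathcomp Require Import all_boot all_order all_algebra.
From mathcomp Require Import all_classical all_reals all_analysis.
From mathcomp Require Import lra.
Import Order.TTheory GRing.Theory Num.Theory.
Local Open Scope classical_set_scope.
Local Open Scope ring_scope.

(* The subaction inequality telescopes: along any orbit segment of length n
   starting at z the Birkhoff sum of phi - alpha is at least
   u(sigma^n z) - u(z).  Along a calibrated backward orbit it is an equality,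
   and the orbit returns close to the accumulation point p arbitrarily late.
   Taking the segment between two visits near p, continuity of u squeezes the
   Mane potential between -e and e for all small eps, so S(p, p) = 0. *)

Lemma dX_sym {R : realType} (x y : X R) : dX x y = dX y x.
Proof. by rewrite /dX; congr (limn (series _)); apply/funext => i; rewrite distrC. Qed.

Lemma dX_continuous_oscillation {R : realType} {f : X R -> R} (p : X R) (e : R) :
  dX_continuous f -> 0 < e ->
  exists2 d : R, 0 < d & forall x z, dX p x < d -> dX p z < d -> f x - f z <= e.
Proof.
move=> fC e_gt0; have e2_gt0 : 0 < e / 2 by rewrite divr_gt0.
have [d d_gt0 near_p] := fC p (e / 2) e2_gt0.
exists d => // x z /near_p + /near_p.
by rewrite !ltr_norml => /andP[? ?] /andP[? ?]; lra.
Qed.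

Lemma cvg_ereal_squeeze0 {R : realType} {T : Type} {F : set_system T}
    {FF : ProperFilter F} (f : T -> \bar R) :
  (forall e : R, 0 < e -> \forall t \near F, ((- e)%:E <= f t <= e%:E)%E) ->
  f @ F --> 0%E.
Proof.
move=> squeeze; apply/fine_cvgP; split.
  apply: filterS (squeeze 1 ltr01) => t /andP[lo hi].
  by rewrite fin_numElt (lt_le_trans (ltNyr _) lo) (le_lt_trans hi (ltry _)).
apply/cvgrPdist_le => e e_gt0; apply: filterS (squeeze e e_gt0) => t /=.
case: (f t) => [r||] /=; rewrite ?leye_eq ?leeNy_eq ?andbF //.
by rewrite !lee_fin sub0r normrN ler_norml.
Qed.

Section Subaction.
Context {R : realType} {phi u : X R -> R}.
Hypothesis u_sub : subaction phi u.

Lemma subaction_sum_ge (z : X R) (n : nat) :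
  u (iter n (@sshift R) z) - u z <=
  \sum_(i < n) (phi (iter i (@sshift R) z) - alpha_phi phi).
Proof.
elim: n => [|n IH]; first by rewrite big_ord0 /= subrr.
have := u_sub.2 (iter n (@sshift R) z).
by rewrite big_ord_recr /=; move: IH; set s := \sum_(i < n) _; lra.
Qed.

Lemma mane_inf_subaction_ge (p : X R) (e : R) : 0 < e ->
  exists2 d : R, 0 < d &
    forall eps, eps < d -> ((- e)%:E <= mane_inf phi p p eps)%E.
Proof.
move=> e_gt0; have [d d_gt0 osc] := dX_continuous_oscillation p e u_sub.1 e_gt0.
exists d => // eps eps_lt_d.
apply: le_ereal_inf_tmp => _ [n [z [_ [pz [zn ->]]]]].
have osc_z : u z - u (iter n (@sshift R) z) <= e.
  apply: osc; first exact: lt_trans pz eps_lt_d.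
  by rewrite dX_sym; exact: lt_trans zn eps_lt_d.
by have := subaction_sum_ge z n; rewrite lee_fin; lra.
Qed.

End Subaction.

Section BackwardOrbit.
Context {R : realType} {phi u : X R -> R} {y : nat -> X R}.
Hypothesis y_backward : forall n : nat, (1 <= n)%N ->
  sshift (y n) = y n.-1 /\ u (y n.-1) = phi (y n) + u (y n) - alpha_phi phi.

Lemma iter_sshift_backward (m i : nat) : (i <= m)%N ->
  iter i (@sshift R) (y m) = y (m - i)%N.
Proof.
elim: i => [|i IH] i_le_m; first by rewrite subn0.
by rewrite /= IH ?(ltnW i_le_m) // (y_backward _ _).1 ?subn_gt0 // subnS.
Qed.

Lemma backward_orbit_sum (m n : nat) : (n <= m)%N ->
  \sum_(i < n) (phi (iter i (@sshift R) (y m)) - alpha_phi phi) =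
  u (y (m - n)%N) - u (y m).
Proof.
elim: n => [|n IH] n_lt_m; first by rewrite big_ord0 subn0 subrr.
rewrite big_ord_recr /= IH ?(ltnW n_lt_m) // iter_sshift_backward ?(ltnW n_lt_m) //.
have [_ calibrated] := y_backward (m - n) (ltac:(by rewrite subn_gt0)).
by rewrite -subnS in calibrated; rewrite calibrated; lra.
Qed.

Lemma mane_inf_backward_le (p : X R) (e : R) :
  dX_continuous u -> accumulation_point y p -> 0 < e ->
  forall eps, 0 < eps -> (mane_inf phi p p eps <= e%:E)%E.
Proof.
move=> uC acc e_gt0 eps eps_gt0.
have [d d_gt0 osc] := dX_continuous_oscillation p e uC e_gt0.
pose r := Num.min eps d.
have [r_le_eps r_le_d] : r <= eps /\ r <= d by rewrite !ge_min !lexx orbT.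
have r_gt0 : 0 < r by rewrite lt_min eps_gt0 d_gt0.
have [n1 [_ [_ near1]]] := acc r r_gt0 0%N.
have [n2 [_ [n1_lt_n2 near2]]] := acc r r_gt0 n1.+1.
have n2n1 : (n2 - (n2 - n1))%N = n1 by rewrite subKn // ltnW.
apply: ge_ereal_inf; exists (u (y n1) - u (y n2))%:E.
  exists (n2 - n1)%N, (y n2); split; first by rewrite subn_gt0.
  rewrite iter_sshift_backward ?leq_subr // backward_orbit_sum ?leq_subr // n2n1.
  split; first by rewrite dX_sym; exact: lt_le_trans near2 r_le_eps.
  by split; first exact: lt_le_trans near1 r_le_eps.
by rewrite lee_fin; apply: osc; rewrite dX_sym; [exact: lt_le_trans near1 r_le_d
                                               | exact: lt_le_trans near2 r_le_d].
Qed.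

End BackwardOrbit.

Theorem lemma2p13 (R : realType) (phi u : X R -> R) (y : nat -> X R) :
  dX_lipschitz phi ->
  calibrated_subaction phi u ->
  (forall n : nat, (1 <= n)%N ->
     sshift (y n) = y n.-1 /\
     u (y n.-1) = phi (y n) + u (y n) - alpha_phi phi) ->
  forall p : X R, accumulation_point y p -> aubry phi p.
Proof.
move=> _ [u_sub _] y_backward p acc.
apply: cvg_lim => //; apply: cvg_ereal_squeeze0 => e e_gt0.
have [d d_gt0 lower] := mane_inf_subaction_ge u_sub p e e_gt0.
near=> eps; apply/andP; split.
  by apply: lower; near: eps; exact: nbhs_right_lt.
apply: (mane_inf_backward_le y_backward p e u_sub.1 acc e_gt0).
by near: eps; exact: nbhs_right_gt.
Unshelve. all: by end_near.
Qed.
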